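(* Let $a\in\mathbb{R}$, $\lambda\in[0,1)$, and let $f=h+\overline{g}$, where $h,g$ are analytic in $\mathbb{D}$ with $h(0)=g(0)=0$, $h-g=k_a$ and $g'/h'=\lambda z$ in $\mathbb{D}$. Then $$P_f(z)=\frac{2(z+a)}{1-z^2}+\frac{\lambda}{1-\lambda z}-\frac{\lambda^2\bar z}{1-|\lambda z|^2}\qquad(z\in\mathbb{D}),$$ and $$\|P_f\|\le 2(1+|a|)+2\lambda^2+\lambda .$$
   Context: $\mathbb{D}$ is the open unit disk. For $a\neq0$, $k_a(z)=\frac{1}{2a}\left[\left(\frac{1+z}{1-z}\right)^a-1\right]$ (principal branch), and $k_0(z)=\frac12\log\frac{1+z}{1-z}$. For a locally univalent harmonic mapping $f=h+\overline g$ with dilatation $\omega=g'/h'$, the pre-Schwarzian derivative is $P_f(z)=\frac{h''(z)}{h'(z)}-\frac{\omega'(z)\overline{\omega(z)}}{1-|\omega(z)|^2}$, and the pre-Schwarzian norm is $\|P_f\|=\sup_{z\in\mathbb{D}}|P_f(z)|(1-|z|^2)$. *)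

From Stdlib Require Import Reals.
From Coquelicot Require Import Coquelicot.
Open Scope R_scope.

Definition in_disk (z : C) : Prop := Cmod z < 1.

Definition analytic_on_disk (f : C -> C) : Prop :=
  forall z : C, in_disk z -> ex_derive f z.

(* Principal argument, with values in (-PI, PI]. *)
Definition Arg (w : C) : R :=
  let x := fst w in let y := snd w in
  if Rlt_dec 0 x then atan (y / x)
  else if Rlt_dec x 0 then
    (if Rle_dec 0 y then atan (y / x) + PI else atan (y / x) - PI)
  else if Rlt_dec 0 y then PI / 2
  else if Rlt_dec y 0 then - (PI / 2)
  else 0.

Definition Clog (w : C) : C := (ln (Cmod w), Arg w).

Definition Cexp (w : C) : C := (exp (fst w) * cos (snd w), exp (fst w) * sin (snd w)).

Definition Cpow_principal (w : C) (a : R) : C :=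
  if Ceq_dec w 0 then 0%C else Cexp (RtoC a * Clog w)%C.

Definition k_fun (a : R) (z : C) : C :=
  let w := ((1 + z) / (1 - z))%C in
  if Req_EM_T a 0 then (/ 2 * Clog w)%C
  else (/ (2 * RtoC a) * (Cpow_principal w a - 1))%C.

Definition dilatation (h g : C -> C) (z : C) : C :=
  (C_derive g z / C_derive h z)%C.

(* Pre-Schwarzian derivative of f = h + conj g. *)
Definition pre_schwarzian (h g : C -> C) (z : C) : C :=
  let w := dilatation h g in
  (C_derive (C_derive h) z / C_derive h z
   - C_derive w z * Cconj (w z) / RtoC (1 - (Cmod (w z)) ^ 2))%C.

Definition pre_schwarzian_norm (h g : C -> C) : Rbar :=
  Lub_Rbar (fun r : R => exists z : C, in_disk z /\
              r = Cmod (pre_schwarzian h g z) * (1 - (Cmod z) ^ 2)).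

From Stdlib Require Import Reals Lra Psatz.
From Coquelicot Require Import Coquelicot.
Open Scope R_scope.

(* Differentiating h - g = k_a and using g' = lam z h' gives h' = k_a' / (1 - lam z),
   where k_a'(z) = ((1 + z)/(1 - z))^a / (1 - z^2) has logarithmic derivative
   2 (z + a) / (1 - z^2).  Hence h''/h' = 2 (z + a)/(1 - z^2) + lam/(1 - lam z), and
   omega = lam z, omega' = lam give the last term of P_f.  For the norm, the three
   terms of P_f times 1 - |z|^2 are at most 2 (|z| + |a|), lam (1 - |z|^2)/(1 - lam |z|)
   and lam^2 |z|, whose sum is at most 2 (1 + |a|) + lam + 2 lam^2.
   The complex derivatives of 1/z, exp and of the principal logarithm on the right
   half-plane are obtained from quadratic bounds on their Taylor remainders. *)

Lemma mean_value_bound (f f' : R -> R) (a b M : R) :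
  (forall c, Rmin a b <= c <= Rmax a b -> derivable_pt_lim f c (f' c)) ->
  (forall c, Rmin a b <= c <= Rmax a b -> Rabs (f' c) <= M) ->
  Rabs (f b - f a) <= M * Rabs (b - a).
Proof.
  intros Hd HM. destruct (MVT_abs f f' a b Hd) as [c [-> Hc]].
  apply Rmult_le_compat_r; [apply Rabs_pos | auto].
Qed.

Lemma mean_value_bound_0 (f f' : R -> R) (x M : R) :
  (forall c, derivable_pt_lim f c (f' c)) ->
  (forall c, Rabs c <= Rabs x -> Rabs (f' c) <= M) ->
  Rabs (f x - f 0) <= M * Rabs x.
Proof.
  intros Hd HM. rewrite <- (Rminus_0_r x) at 2.
  apply mean_value_bound with f'; auto.
  intros c Hc. apply HM. rewrite Rmin_comm, Rmax_comm in Hc.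
  pose proof (Rabs_le_between_min_max x 0 c Hc) as Hcx. rewrite !Rminus_0_r in Hcx. exact Hcx.
Qed.

Lemma Rabs_sin_le x : Rabs (sin x) <= Rabs x.
Proof.
  replace (sin x) with (sin x - sin 0) by (rewrite sin_0; ring).
  rewrite <- (Rmult_1_l (Rabs x)). apply mean_value_bound_0 with cos.
  - intros c. apply derivable_pt_lim_sin.
  - intros c _. apply Rabs_le, COS_bound.
Qed.

Lemma cos_sub_1_bound x : Rabs (cos x - 1) <= x ^ 2.
Proof.
  replace (cos x - 1) with (cos x - cos 0) by (rewrite cos_0; ring).
  rewrite <- pow2_abs, <- Rsqr_pow2. unfold Rsqr.
  apply mean_value_bound_0 with (fun c => - sin c).
  - intros c. apply derivable_pt_lim_cos.
  - intros c Hc. rewrite Rabs_Ropp. eapply Rle_trans; [apply Rabs_sin_le | exact Hc].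
Qed.

Lemma sin_sub_id_bound x : Rabs x <= 1 -> Rabs (sin x - x) <= x ^ 2.
Proof.
  intros Hx. replace (sin x - x) with ((sin x - x) - (sin 0 - 0)) by (rewrite sin_0; ring).
  rewrite <- pow2_abs, <- Rsqr_pow2. unfold Rsqr.
  apply (mean_value_bound_0 (fun c => sin c - c) (fun c => cos c - 1)).
  - intros c. apply is_derive_Reals. auto_derive; [exact I | ring].
  - intros c Hc. pose proof (cos_sub_1_bound c) as Hcos. pose proof (Rabs_pos c).
    rewrite <- pow2_abs in Hcos. nra.
Qed.

Lemma exp_le_3_of_le_1 x : x <= 1 -> exp x <= 3.
Proof.
  intros Hx. apply Rle_trans with (exp 1); [| exact exp_le_3].
  destruct (Req_dec x 1) as [-> | Hx1]; [right; reflexivity | left; apply exp_increasing; lra].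
Qed.

Lemma exp_sub_1_bound x : Rabs x <= 1 -> Rabs (exp x - 1) <= 3 * Rabs x.
Proof.
  intros Hx. rewrite <- exp_0. apply mean_value_bound_0 with exp.
  - intros c. apply derivable_pt_lim_exp.
  - intros c Hc. rewrite Rabs_right by (left; apply exp_pos).
    apply exp_le_3_of_le_1. apply Rabs_le_between in Hc. lra.
Qed.

Lemma exp_sub_1_sub_id_bound x : Rabs x <= 1 -> Rabs (exp x - 1 - x) <= 3 * x ^ 2.
Proof.
  intros Hx. replace (exp x - 1 - x) with ((exp x - x) - (exp 0 - 0)) by (rewrite exp_0; ring).
  rewrite <- pow2_abs, <- Rsqr_pow2. unfold Rsqr. rewrite <- Rmult_assoc.
  apply (mean_value_bound_0 (fun c => exp c - c) (fun c => exp c - 1)).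
  - intros c. apply is_derive_Reals. auto_derive; [exact I | ring].
  - intros c Hc. eapply Rle_trans; [apply exp_sub_1_bound; lra |].
    apply Rmult_le_compat_l; lra.
Qed.

Lemma ln_lipschitz (m a b : R) :
  0 < m -> m <= a -> m <= b -> Rabs (ln b - ln a) <= / m * Rabs (b - a).
Proof.
  intros Hm Ha Hb. pose proof (Rmin_glb a b m Ha Hb).
  apply mean_value_bound with Rinv.
  - intros c Hc. apply derivable_pt_lim_ln. lra.
  - intros c Hc. rewrite Rabs_inv, Rabs_right by lra. apply Rinv_le_contravar; lra.
Qed.

Lemma atan_lipschitz (a b : R) : Rabs (atan b - atan a) <= Rabs (b - a).
Proof.
  rewrite <- (Rmult_1_l (Rabs (b - a))).
  apply mean_value_bound with (fun c => / (1 + c ^ 2)).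
  - intros c _. apply derivable_pt_lim_atan.
  - intros c _. pose proof (pow2_ge_0 c).
    rewrite Rabs_right by (apply Rle_ge, Rlt_le, Rinv_0_lt_compat; lra).
    rewrite <- Rinv_1. apply Rinv_le_contravar; lra.
Qed.

Lemma Cmod_le_Rabs_re_im (c : C) : Cmod c <= Rabs (fst c) + Rabs (snd c).
Proof.
  destruct c as [x y]. unfold Cmod; simpl.
  pose proof (Rabs_pos x); pose proof (Rabs_pos y).
  rewrite <- (sqrt_Rsqr (Rabs x + Rabs y)) by lra.
  apply sqrt_le_1_alt. unfold Rsqr.
  replace (x * (x * 1) + y * (y * 1)) with (Rabs x ^ 2 + Rabs y ^ 2) by (rewrite !pow2_abs; ring).
  nra.
Qed.

Lemma Cmod_sub_le (u v : C) : Cmod (u - v)%C <= Cmod u + Cmod v.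
Proof. rewrite <- (Cmod_opp v). apply Cmod_triangle. Qed.

Lemma Cmod_sub_Cmod_le (w z : C) : Rabs (Cmod w - Cmod z) <= Cmod (w - z).
Proof.
  pose proof (Cmod_triangle (w - z) z) as Hw. pose proof (Cmod_triangle (z - w) w) as Hz.
  replace (w - z + z)%C with w in Hw by ring. replace (z - w + w)%C with z in Hz by ring.
  replace (z - w)%C with (- (w - z))%C in Hz by ring. rewrite Cmod_opp in Hz.
  apply Rabs_le. lra.
Qed.

Lemma Cmod_one_sub_ge (w : C) : 1 - Cmod w <= Cmod (1 - w)%C.
Proof.
  pose proof (Cmod_triangle (1 - w) w) as Htri.
  replace (1 - w + w)%C with (RtoC 1) in Htri by ring. rewrite Cmod_1 in Htri. lra.
Qed.

Lemma one_sub_neq0 (w : C) : Cmod w < 1 -> (1 - w)%C <> 0%C.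
Proof. intros Hw E. pose proof (Cmod_one_sub_ge w) as Hge. rewrite E, Cmod_0 in Hge. lra. Qed.

Lemma Cmod_div_le (u v : C) (N D : R) :
  Cmod u <= N -> 0 < D <= Cmod v -> Cmod (u / v)%C <= N / D.
Proof.
  intros Hu Hv. assert (Hv0 : v <> 0%C) by (intros ->; rewrite Cmod_0 in Hv; lra).
  rewrite Cmod_div by exact Hv0. unfold Rdiv.
  apply Rmult_le_compat; [apply Cmod_ge_0 | apply Rlt_le, Rinv_0_lt_compat; lra | exact Hu |].
  apply Rinv_le_contravar; lra.
Qed.

Lemma Cconj_RtoC (r : R) : Cconj (RtoC r) = RtoC r.
Proof. apply injective_projections; simpl; ring. Qed.

(** * Complex derivatives *)

(* Coquelicot's rules for ring-valued functions ([is_derive_mult], the inner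
   function in [is_derive_comp]) are stated for [AbsRing_NormedModule C_AbsRing],
   which is not convertible to the canonical [C_NormedModule]. *)
Lemma is_derive_C_NormedModule_iff (f : C -> C) (z l : C) :
  @is_derive C_AbsRing C_NormedModule f z l <->
  @is_derive C_AbsRing (AbsRing_NormedModule C_AbsRing) f z l.
Proof.
  split; intros [[Hplus Hscal [M HM]] Hlim];
    (split; [split; [exact Hplus | exact Hscal | exists M; exact HM] | exact Hlim]).
Qed.

Lemma is_derive_Cconst (c z : C) : is_derive (fun _ => c) z (RtoC 0).
Proof. exact (@is_derive_const C_AbsRing C_NormedModule c z). Qed.

Lemma is_derive_Cid (z : C) : is_derive (fun x : C => x) z (RtoC 1).
Proof. apply is_derive_C_NormedModule_iff, (@is_derive_id C_AbsRing). Qed.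

Lemma is_derive_Cplus (f g : C -> C) (z a b : C) :
  is_derive f z a -> is_derive g z b -> is_derive (fun x => f x + g x)%C z (a + b)%C.
Proof. exact (is_derive_plus f g z a b). Qed.

Lemma is_derive_Cminus (f g : C -> C) (z a b : C) :
  is_derive f z a -> is_derive g z b -> is_derive (fun x => f x - g x)%C z (a - b)%C.
Proof. exact (is_derive_minus f g z a b). Qed.

Lemma is_derive_Cmult (f g : C -> C) (z a b : C) :
  is_derive f z a -> is_derive g z b ->
  is_derive (fun x => f x * g x)%C z (a * g z + f z * b)%C.
Proof.
  rewrite !is_derive_C_NormedModule_iff. intros Hf Hg.
  exact (is_derive_mult f g z a b Hf Hg Cmult_comm).
Qed.

Lemma is_derive_Cscal (c : C) (f : C -> C) (z l : C) :
  is_derive f z l -> is_derive (fun x => c * f x)%C z (c * l)%C.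
Proof.
  intros Hf. replace (c * l)%C with (0 * f z + c * l)%C by ring.
  exact (is_derive_Cmult _ _ z _ _ (is_derive_Cconst c z) Hf).
Qed.

Lemma is_derive_Ccomp (f g : C -> C) (z a b : C) :
  is_derive f (g z) a -> is_derive g z b -> is_derive (fun x => f (g x)) z (b * a)%C.
Proof.
  intros Hf Hg. apply is_derive_C_NormedModule_iff in Hg. exact (is_derive_comp f g z a b Hf Hg).
Qed.

Lemma is_derive_of_quadratic_remainder (f : C -> C) (z l : C) (d M : R) :
  0 < d ->
  (forall w, Cmod (w - z) < d -> Cmod (f w - f z - l * (w - z))%C <= M * Cmod (w - z) ^ 2) ->
  is_derive f z l.
Proof.
  intros Hd Hrem. split; [apply is_linear_scal_l |].
  intros x Hx. apply (@is_filter_lim_locally_unique _ (AbsRing_NormedModule C_AbsRing)) in Hx.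
  subst x. intros eps.
  set (M' := Rabs M + 1).
  assert (HM' : 0 < M') by (pose proof (Rabs_pos M); unfold M'; lra).
  assert (Hr : 0 < Rmin d (eps / M'))
    by (apply Rmin_pos; [lra | apply Rdiv_lt_0_compat; [apply cond_pos | lra]]).
  exists (mkposreal _ Hr). intros w Hw.
  change (Cmod (w - z) < Rmin d (eps / M')) in Hw.
  change (Cmod (f w - f z - (w - z) * l)%C <= eps * Cmod (w - z)).
  rewrite Cmult_comm.
  pose proof (Rmin_l d (eps / M')). pose proof (Rmin_r d (eps / M')).
  eapply Rle_trans; [apply Hrem; lra |].
  assert (HMw : M' * Cmod (w - z) <= eps).
  { apply Rmult_le_reg_r with (/ M'); [apply Rinv_0_lt_compat; lra |].
    rewrite Rmult_comm, <- Rmult_assoc, Rinv_l, Rmult_1_l by lra. unfold Rdiv in *. lra. }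
  pose proof (Cmod_ge_0 (w - z)). pose proof (Rle_abs M). unfold M' in *. nra.
Qed.

Lemma is_derive_Cinv (z : C) : z <> 0%C -> is_derive Cinv z (- / (z * z))%C.
Proof.
  intros Hz. pose proof (proj1 (Cmod_gt_0 z) Hz) as Hmz.
  apply (is_derive_of_quadratic_remainder _ _ _ (Cmod z / 2) (2 / Cmod z ^ 3)); [lra |].
  intros w Hw.
  assert (Hmw : Cmod z / 2 <= Cmod w).
  { pose proof (Cmod_triangle w (z - w)%C) as Htri.
    replace (w + (z - w))%C with z in Htri by ring.
    rewrite <- Cmod_opp, Copp_minus_distr in Hw. lra. }
  assert (Hw0 : w <> 0%C) by (intros ->; rewrite Cmod_0 in Hmw; lra).
  replace (/ w - / z - - / (z * z) * (w - z))%C with ((w - z) * (w - z) / (w * (z * z)))%C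
    by (field; split; assumption).
  rewrite Cmod_div, !Cmod_mult by (repeat apply Cmult_neq_0; assumption).
  pose proof (pow2_ge_0 (Cmod (w - z))).
  set (e := Cmod (w - z)) in *.
  replace (e * e / (Cmod w * (Cmod z * Cmod z))) with (e ^ 2 * / (Cmod w * (Cmod z * Cmod z)))
    by (unfold Rdiv; ring).
  replace (2 / Cmod z ^ 3 * e ^ 2) with (e ^ 2 * / (Cmod z ^ 3 / 2)) by (field; lra).
  apply Rmult_le_compat_l; [assumption |].
  apply Rinv_le_contravar; [apply Rdiv_lt_0_compat; [apply pow_lt |]; lra |]. simpl. nra.
Qed.

Lemma is_derive_Cinv_comp (f : C -> C) (z l : C) :
  is_derive f z l -> f z <> 0%C -> is_derive (fun x => / f x)%C z (- l / (f z * f z))%C.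
Proof.
  intros Hf Hfz. replace (- l / (f z * f z))%C with (l * - / (f z * f z))%C by (field; exact Hfz).
  exact (is_derive_Ccomp Cinv f z _ _ (is_derive_Cinv _ Hfz) Hf).
Qed.

(** * Exponential and principal logarithm *)

Lemma Cexp_plus (u v : C) : Cexp (u + v)%C = (Cexp u * Cexp v)%C.
Proof.
  destruct u as [x y], v as [s t]. unfold Cexp; simpl.
  rewrite exp_plus, cos_plus, sin_plus. apply injective_projections; simpl; ring.
Qed.

Lemma Cexp_0 : Cexp 0 = 1%C.
Proof.
  unfold Cexp. simpl. rewrite exp_0, cos_0, sin_0. apply injective_projections; simpl; ring.
Qed.

Lemma Cexp_sub_1_sub_id_bound (u : C) :
  Cmod u < 1 -> Cmod (Cexp u - 1 - u)%C <= 12 * Cmod u ^ 2.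
Proof.
  intros Hu. pose proof (Rmax_Cmod u) as Hmax.
  destruct u as [s t]. set (c := Cmod (s, t)) in *. simpl in Hmax.
  pose proof (Rmax_l (Rabs s) (Rabs t)). pose proof (Rmax_r (Rabs s) (Rabs t)).
  assert (Hs : Rabs s <= c) by lra. assert (Ht : Rabs t <= c) by lra.
  pose proof (Rabs_pos s). pose proof (Rabs_pos t).
  assert (Hs2 : s ^ 2 <= c ^ 2) by (rewrite <- pow2_abs; apply pow_incr; lra).
  assert (Ht2 : t ^ 2 <= c ^ 2) by (rewrite <- pow2_abs; apply pow_incr; lra).
  assert (Hst : Rabs s * Rabs t <= c ^ 2) by nra.
  pose proof (exp_sub_1_bound s ltac:(lra)) as Hexp1.
  pose proof (exp_sub_1_sub_id_bound s ltac:(lra)) as Hexp2.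
  pose proof (cos_sub_1_bound t) as Hcos. pose proof (sin_sub_id_bound t ltac:(lra)) as Hsin.
  assert (He : 0 < exp s <= 3).
  { split; [apply exp_pos | apply exp_le_3_of_le_1; apply Rabs_le_between in Hs; lra]. }
  replace (Cexp (s, t) - 1 - (s, t))%C
    with (exp s * (cos t - 1) + (exp s - 1 - s), exp s * (sin t - t) + (exp s - 1) * t)
    by (apply injective_projections; simpl; ring).
  eapply Rle_trans; [apply Cmod_le_Rabs_re_im | cbn [fst snd]].
  assert (Hre : Rabs (exp s * (cos t - 1) + (exp s - 1 - s)) <= 3 * t ^ 2 + 3 * s ^ 2).
  { eapply Rle_trans; [apply Rabs_triang |]. rewrite Rabs_mult, (Rabs_right (exp s)) by lra.
    pose proof (Rabs_pos (cos t - 1)). nra. }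
  assert (Him : Rabs (exp s * (sin t - t) + (exp s - 1) * t) <= 3 * t ^ 2 + 3 * (Rabs s * Rabs t)).
  { eapply Rle_trans; [apply Rabs_triang |]. rewrite !Rabs_mult, (Rabs_right (exp s)) by lra.
    pose proof (Rabs_pos (sin t - t)). pose proof (Rabs_pos t). nra. }
  lra.
Qed.

Lemma is_derive_Cexp (z : C) : is_derive Cexp z (Cexp z).
Proof.
  apply (is_derive_of_quadratic_remainder _ _ _ 1 (12 * Cmod (Cexp z))); [lra |].
  intros w Hw.
  assert (Ew : Cexp w = (Cexp z * Cexp (w - z))%C) by (rewrite <- Cexp_plus; f_equal; ring).
  rewrite Ew.
  replace (Cexp z * Cexp (w - z) - Cexp z - Cexp z * (w - z))%C
    with (Cexp z * (Cexp (w - z) - 1 - (w - z)))%C by ring.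
  rewrite Cmod_mult, (Rmult_comm 12), Rmult_assoc.
  apply Rmult_le_compat_l; [apply Cmod_ge_0 | apply Cexp_sub_1_sub_id_bound, Hw].
Qed.

Lemma Arg_of_fst_pos (w : C) : 0 < fst w -> Arg w = atan (snd w / fst w).
Proof. intros Hw. unfold Arg. destruct (Rlt_dec 0 (fst w)); [reflexivity | lra]. Qed.

Lemma Cexp_Clog (w : C) : 0 < fst w -> Cexp (Clog w) = w.
Proof.
  destruct w as [x y]. simpl. intros Hx.
  unfold Clog, Cexp. rewrite Arg_of_fst_pos by (simpl; lra). simpl.
  pose proof (re_le_Cmod (x, y)) as Hre. simpl in Hre. rewrite Rabs_right in Hre by lra.
  rewrite exp_ln, cos_atan, sin_atan by lra.
  assert (Hs : 0 < sqrt (1 + (y / x)²)) by (apply sqrt_lt_R0; pose proof (Rle_0_sqr (y / x)); lra).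
  assert (E : Cmod (x, y) = x * sqrt (1 + (y / x)²)).
  { rewrite <- (sqrt_square x) at 2 by lra. rewrite <- sqrt_mult_alt by nra.
    unfold Cmod. simpl. f_equal. unfold Rsqr. field. lra. }
  rewrite E. apply injective_projections; simpl; field; lra.
Qed.

Lemma Clog_locally_lipschitz (z : C) : 0 < fst z ->
  exists K, 0 < K /\
    forall w, Cmod (w - z) < fst z / 2 -> Cmod (Clog w - Clog z)%C <= K * Cmod (w - z).
Proof.
  destruct z as [x y]. simpl. intros Hx.
  exists (2 / x + 2 * (x + Rabs y) / x ^ 2). split.
  { pose proof (Rabs_pos y).
    assert (0 < 2 / x) by (apply Rdiv_lt_0_compat; lra).
    assert (0 <= 2 * (x + Rabs y) / x ^ 2) by (apply Rle_mult_inv_pos; [lra | apply pow_lt; lra]).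
    lra. }
  intros [u v] Hw. pose proof (Rmax_Cmod ((u, v) - (x, y))%C) as Hmax.
  set (e := Cmod ((u, v) - (x, y))%C) in *. simpl in Hmax.
  pose proof (Rmax_l (Rabs (u + - x)) (Rabs (v + - y))).
  pose proof (Rmax_r (Rabs (u + - x)) (Rabs (v + - y))).
  assert (Hu : Rabs (u - x) <= e) by (unfold Rminus; lra).
  assert (Hv : Rabs (v - y) <= e) by (unfold Rminus; lra).
  assert (Hux : x / 2 < u) by (apply Rabs_le_between in Hu; lra).
  pose proof (re_le_Cmod (u, v)) as Hw'. pose proof (re_le_Cmod (x, y)) as Hz'. simpl in Hw', Hz'.
  rewrite Rabs_right in Hw', Hz' by lra.
  unfold Clog. rewrite !Arg_of_fst_pos by (simpl; lra). simpl.
  eapply Rle_trans; [apply Cmod_le_Rabs_re_im | cbn [fst snd Cminus Cplus Copp]].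
  assert (Hln : Rabs (ln (Cmod (u, v)) - ln (Cmod (x, y))) <= 2 / x * e).
  { eapply Rle_trans; [apply (ln_lipschitz (x / 2)); lra |].
    replace (/ (x / 2)) with (2 / x) by (field; lra).
    apply Rmult_le_compat_l; [apply Rlt_le, Rdiv_lt_0_compat; lra | apply Cmod_sub_Cmod_le]. }
  assert (Hat : Rabs (atan (v / u) - atan (y / x)) <= 2 * (x + Rabs y) / x ^ 2 * e).
  { eapply Rle_trans; [apply atan_lipschitz |].
    replace (v / u - y / x) with (((v - y) * x - y * (u - x)) / (u * x)) by (field; lra).
    rewrite Rabs_div, (Rabs_right (u * x)) by nra.
    assert (Hnum : Rabs ((v - y) * x - y * (u - x)) <= (x + Rabs y) * e).
    { eapply Rle_trans; [apply Rabs_triang |].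
      rewrite Rabs_Ropp, !Rabs_mult, (Rabs_right x) by lra.
      pose proof (Rabs_pos y). pose proof (Rabs_pos (u - x)). pose proof (Rabs_pos (v - y)). nra. }
    apply Rle_trans with ((x + Rabs y) * e / (x / 2 * x)).
    - unfold Rdiv. pose proof (Rabs_pos ((v - y) * x - y * (u - x))).
      apply Rmult_le_compat; try lra.
      + apply Rlt_le, Rinv_0_lt_compat; nra.
      + apply Rinv_le_contravar; nra.
    - right. field. lra. }
  rewrite Rmult_plus_distr_r. unfold Rminus in Hln, Hat. exact (Rplus_le_compat _ _ _ _ Hln Hat).
Qed.

Lemma is_derive_Clog (z : C) : 0 < fst z -> is_derive Clog z (/ z)%C.
Proof.
  intros Hz. assert (Hz0 : z <> 0%C) by (intros ->; simpl in Hz; lra).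
  destruct (Clog_locally_lipschitz z Hz) as [K [HK Hlip]].
  apply (is_derive_of_quadratic_remainder _ _ _ (Rmin (fst z / 2) (/ K)) (12 * K ^ 2)).
  { apply Rmin_pos; [lra | apply Rinv_0_lt_compat, HK]. }
  intros w Hw. pose proof (Rmin_l (fst z / 2) (/ K)). pose proof (Rmin_r (fst z / 2) (/ K)).
  assert (Hw0 : 0 < fst w).
  { pose proof (re_le_Cmod (w - z)%C) as Hre. simpl in Hre. apply Rabs_le_between in Hre. lra. }
  set (u := (Clog w - Clog z)%C).
  assert (Hu : Cmod u <= K * Cmod (w - z)) by (apply Hlip; lra).
  assert (Hu1 : Cmod u < 1).
  { eapply Rle_lt_trans; [exact Hu |].
    apply Rmult_lt_reg_l with (/ K); [apply Rinv_0_lt_compat, HK |].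
    rewrite <- Rmult_assoc, Rinv_l, Rmult_1_l, Rmult_1_r by lra. lra. }
  (* [w = z e^u], so the remainder of [Clog] at [z] is minus that of [Cexp] at [0]. *)
  assert (Hwz : w = (z * Cexp u)%C).
  { rewrite <- (Cexp_Clog w Hw0), <- (Cexp_Clog z Hz) at 1.
    rewrite <- Cexp_plus. f_equal. unfold u. ring. }
  rewrite Hwz. replace (u - / z * (z * Cexp u - z))%C with (- (Cexp u - 1 - u))%C
    by (field; exact Hz0).
  rewrite <- Hwz, Cmod_opp.
  eapply Rle_trans; [apply Cexp_sub_1_sub_id_bound, Hu1 |].
  rewrite Rmult_assoc, <- Rpow_mult_distr. apply Rmult_le_compat_l; [lra |].
  apply pow_incr. split; [apply Cmod_ge_0 | exact Hu].
Qed.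

(** * The functions k_a *)

Lemma in_disk_locally (z : C) :
  in_disk z -> @locally (AbsRing_UniformSpace C_AbsRing) z in_disk.
Proof.
  unfold in_disk. intros Hz. assert (Hr : 0 < 1 - Cmod z) by lra.
  exists (mkposreal _ Hr). intros w Hw. change C in w.
  change (Cmod (w - z) < 1 - Cmod z) in Hw.
  pose proof (Cmod_triangle (w - z) z) as Htri. replace (w - z + z)%C with w in Htri by ring.
  lra.
Qed.

Lemma is_derive_ext_disk (f g : C -> C) (z l : C) :
  in_disk z -> (forall x, in_disk x -> f x = g x) -> is_derive f z l -> is_derive g z l.
Proof.
  intros Hz Hfg. apply is_derive_ext_loc.
  eapply filter_imp; [| exact (in_disk_locally z Hz)]. exact Hfg.
Qed.

Lemma Cmod_RtoC_mult_lt_1 (lam : R) (z : C) :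
  0 <= lam < 1 -> in_disk z -> Cmod (RtoC lam * z) < 1.
Proof.
  unfold in_disk. intros Hlam Hz. rewrite Cmod_mult, Cmod_R, Rabs_right by lra.
  pose proof (Cmod_ge_0 z). nra.
Qed.

Lemma one_sub_sqr_neq0 (z : C) : in_disk z -> (1 - z * z)%C <> 0%C.
Proof.
  unfold in_disk. intros Hz. apply one_sub_neq0. rewrite Cmod_mult.
  pose proof (Cmod_ge_0 z). nra.
Qed.

Definition cayley (z : C) : C := ((1 + z) / (1 - z))%C.

Lemma fst_cayley_pos (z : C) : in_disk z -> 0 < fst (cayley z).
Proof.
  unfold in_disk. destruct z as [x y]. intros Hz.
  assert (Hxy : x * x + y * y < 1).
  { assert (Hm : Cmod (x, y) ^ 2 < 1) by (pose proof (Cmod_ge_0 (x, y)); nra).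
    rewrite Cmod2_alt in Hm. unfold Re, Im in Hm. simpl in Hm. nra. }
  replace (fst (cayley (x, y))) with ((1 - x * x - y * y) / ((1 - x) ^ 2 + y ^ 2))
    by (unfold cayley, Cdiv, Cinv, Cmult; simpl; field; nra).
  apply Rdiv_lt_0_compat; nra.
Qed.

Lemma is_derive_cayley (z : C) : in_disk z ->
  is_derive cayley z (2 / ((1 - z) * (1 - z)))%C.
Proof.
  intros Hz. pose proof (one_sub_neq0 z Hz) as Hz1.
  assert (Hnum : is_derive (fun x => 1 + x)%C z (0 + 1)%C)
    by (apply is_derive_Cplus; [apply is_derive_Cconst | apply is_derive_Cid]).
  assert (Hden : is_derive (fun x => 1 - x)%C z (0 - 1)%C)
    by (apply is_derive_Cminus; [apply is_derive_Cconst | apply is_derive_Cid]).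
  pose proof (is_derive_Cmult _ _ z _ _ Hnum (is_derive_Cinv_comp _ z _ Hden Hz1)) as Hq.
  replace (2 / ((1 - z) * (1 - z)))%C
    with ((0 + 1) * / (1 - z) + (1 + z) * (- (0 - 1) / ((1 - z) * (1 - z))))%C
    by (field; exact Hz1).
  exact Hq.
Qed.

Lemma is_derive_Clog_cayley (z : C) : in_disk z ->
  is_derive (fun x => Clog (cayley x)) z (2 / (1 - z * z))%C.
Proof.
  intros Hz. pose proof (one_sub_neq0 z Hz) as Hz1.
  assert (Hz2 : (1 + z)%C <> 0%C).
  { replace (1 + z)%C with (1 - - z)%C by ring. apply one_sub_neq0.
    rewrite Cmod_opp. exact Hz. }
  replace (2 / (1 - z * z))%C with (2 / ((1 - z) * (1 - z)) * / cayley z)%C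
    by (unfold cayley; field; repeat split; try assumption; apply one_sub_sqr_neq0, Hz).
  exact (is_derive_Ccomp Clog cayley z _ _
           (is_derive_Clog _ (fst_cayley_pos z Hz)) (is_derive_cayley z Hz)).
Qed.

Lemma Cpow_principal_cayley (a : R) (z : C) : in_disk z ->
  Cpow_principal (cayley z) a = Cexp (a * Clog (cayley z))%C.
Proof.
  intros Hz. unfold Cpow_principal. destruct (Ceq_dec (cayley z) 0) as [E | _]; [| reflexivity].
  pose proof (fst_cayley_pos z Hz) as Hpos. rewrite E in Hpos. simpl in Hpos. lra.
Qed.

Lemma is_derive_Cpow_principal_cayley (a : R) (z : C) : in_disk z ->
  is_derive (fun x => Cpow_principal (cayley x) a) z
    (a * (2 / (1 - z * z)) * Cpow_principal (cayley z) a)%C.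
Proof.
  intros Hz. rewrite Cpow_principal_cayley by exact Hz.
  apply (is_derive_ext_disk (fun x => Cexp (a * Clog (cayley x)))%C); [exact Hz | |].
  { intros x Hx. symmetry. apply Cpow_principal_cayley, Hx. }
  exact (is_derive_Ccomp Cexp _ z _ _ (is_derive_Cexp _)
           (is_derive_Cscal a _ z _ (is_derive_Clog_cayley z Hz))).
Qed.

Definition k_fun_deriv (a : R) (z : C) : C := (Cpow_principal (cayley z) a / (1 - z * z))%C.

Lemma is_derive_k_fun (a : R) (z : C) : in_disk z -> is_derive (k_fun a) z (k_fun_deriv a z).
Proof.
  intros Hz. pose proof (one_sub_sqr_neq0 z Hz) as Hz2.
  unfold k_fun, k_fun_deriv. destruct (Req_EM_T a 0) as [-> | Ha].
  - replace (Cpow_principal (cayley z) 0 / (1 - z * z))%C with (/ 2 * (2 / (1 - z * z)))%C.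
    + exact (is_derive_Cscal _ _ z _ (is_derive_Clog_cayley z Hz)).
    + rewrite Cpow_principal_cayley, Cmult_0_l, Cexp_0 by exact Hz. field. exact Hz2.
  - replace (Cpow_principal (cayley z) a / (1 - z * z))%C
      with (/ (2 * a) * (a * (2 / (1 - z * z)) * Cpow_principal (cayley z) a - 0))%C.
    + apply is_derive_Cscal, is_derive_Cminus;
        [apply is_derive_Cpow_principal_cayley, Hz | apply is_derive_Cconst].
    + assert (Ha' : RtoC a <> 0%C) by (intros E; apply Ha; injection E; auto).
      field. split; assumption.
Qed.

Lemma is_derive_k_fun_deriv (a : R) (z : C) : in_disk z ->
  is_derive (k_fun_deriv a) z (k_fun_deriv a z * (2 * (z + a) / (1 - z * z)))%C.
Proof.
  intros Hz. pose proof (one_sub_sqr_neq0 z Hz) as Hz2.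
  assert (Hden : is_derive (fun x => 1 - x * x)%C z (0 - (1 * z + z * 1))%C)
    by (apply is_derive_Cminus;
        [apply is_derive_Cconst | apply is_derive_Cmult; apply is_derive_Cid]).
  pose proof (is_derive_Cmult _ _ z _ _ (is_derive_Cpow_principal_cayley a z Hz)
                (is_derive_Cinv_comp _ z _ Hden Hz2)) as Hk.
  unfold k_fun_deriv.
  replace (Cpow_principal (cayley z) a / (1 - z * z) * (2 * (z + a) / (1 - z * z)))%C
    with (a * (2 / (1 - z * z)) * Cpow_principal (cayley z) a * / (1 - z * z)
          + Cpow_principal (cayley z) a * (- (0 - (1 * z + z * 1)) / ((1 - z * z) * (1 - z * z))))%C
    by (field; exact Hz2).
  exact Hk.
Qed.

(** * The pre-Schwarzian derivative *)

Definition shear_pre_schwarzian (a lam : R) (z : C) : C :=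
  (2 * (z + RtoC a) / (1 - z ^ 2) + RtoC lam / (1 - RtoC lam * z)
   - RtoC (lam ^ 2) * Cconj z / RtoC (1 - (Cmod (RtoC lam * z)) ^ 2))%C.

Section Shear.

Variables (a lam : R) (h g : C -> C).
Hypothesis Hlam : 0 <= lam < 1.
Hypothesis Hh : analytic_on_disk h.
Hypothesis Hg : analytic_on_disk g.
Hypothesis Hhg : forall z, in_disk z -> (h z - g z)%C = k_fun a z.
Hypothesis Hdil : forall z, in_disk z ->
  C_derive h z <> 0%C /\ (C_derive g z / C_derive h z)%C = (RtoC lam * z)%C.

Lemma one_sub_lam_neq0 (z : C) : in_disk z -> (1 - lam * z)%C <> 0%C.
Proof. intros Hz. apply one_sub_neq0, Cmod_RtoC_mult_lt_1; assumption. Qed.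

Lemma C_derive_h (z : C) : in_disk z -> C_derive h z = (k_fun_deriv a z / (1 - lam * z))%C.
Proof.
  intros Hz. destruct (Hdil z Hz) as [Hh0 Hq].
  assert (Hk : is_derive (k_fun a) z (C_derive h z - C_derive g z)%C).
  { apply (is_derive_ext_disk (fun x => h x - g x)%C); [exact Hz | exact Hhg |].
    apply is_derive_Cminus;
      [exact (C_derive_correct h z z (Hh z Hz)) | exact (C_derive_correct g z z (Hg z Hz))]. }
  apply is_C_derive_unique in Hk.
  rewrite (is_C_derive_unique _ _ _ (is_derive_k_fun a z Hz)) in Hk.
  assert (Hg' : C_derive g z = (lam * z * C_derive h z)%C) by (rewrite <- Hq; field; exact Hh0).
  rewrite Hk, Hg'. field. exact (one_sub_lam_neq0 z Hz).
Qed.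

Lemma C_derive_C_derive_h (z : C) : in_disk z ->
  C_derive (C_derive h) z
  = (C_derive h z * (2 * (z + a) / (1 - z * z) + lam / (1 - lam * z)))%C.
Proof.
  intros Hz. pose proof (one_sub_lam_neq0 z Hz) as Hlz. pose proof (one_sub_sqr_neq0 z Hz) as Hz2.
  apply is_C_derive_unique.
  apply (is_derive_ext_disk (fun x => k_fun_deriv a x * / (1 - lam * x))%C); [exact Hz | |].
  { intros x Hx. symmetry. apply C_derive_h, Hx. }
  assert (Hden : is_derive (fun x => 1 - lam * x)%C z (0 - lam * 1)%C)
    by (apply is_derive_Cminus; [apply is_derive_Cconst | apply is_derive_Cscal, is_derive_Cid]).
  rewrite C_derive_h by exact Hz.
  replace (k_fun_deriv a z / (1 - lam * z) * (2 * (z + a) / (1 - z * z) + lam / (1 - lam * z)))%C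
    with (k_fun_deriv a z * (2 * (z + a) / (1 - z * z)) * / (1 - lam * z)
          + k_fun_deriv a z * (- (0 - lam * 1) / ((1 - lam * z) * (1 - lam * z))))%C
    by (field; split; assumption).
  exact (is_derive_Cmult _ _ z _ _ (is_derive_k_fun_deriv a z Hz)
           (is_derive_Cinv_comp _ z _ Hden Hlz)).
Qed.

Lemma dilatation_eq (z : C) : in_disk z -> dilatation h g z = (lam * z)%C.
Proof. intros Hz. exact (proj2 (Hdil z Hz)). Qed.

Lemma C_derive_dilatation (z : C) : in_disk z -> C_derive (dilatation h g) z = lam.
Proof.
  intros Hz. apply is_C_derive_unique.
  apply (is_derive_ext_disk (fun x => lam * x)%C); [exact Hz | |].
  { intros x Hx. symmetry. apply dilatation_eq, Hx. }
  pose proof (is_derive_Cscal lam _ z _ (is_derive_Cid z)) as Hd. rewrite Cmult_1_r in Hd.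
  exact Hd.
Qed.

Lemma pre_schwarzian_eq (z : C) : in_disk z -> pre_schwarzian h g z = shear_pre_schwarzian a lam z.
Proof.
  intros Hz. unfold pre_schwarzian, shear_pre_schwarzian. cbv zeta.
  rewrite C_derive_C_derive_h, C_derive_dilatation, dilatation_eq by exact Hz.
  destruct (Hdil z Hz) as [Hh0 _].
  assert (Hden : RtoC (1 - Cmod (lam * z) ^ 2) <> 0%C).
  { pose proof (Cmod_RtoC_mult_lt_1 lam z Hlam Hz). pose proof (Cmod_ge_0 (lam * z)).
    intros E. injection E. nra. }
  rewrite Cmult_conj, Cconj_RtoC, RtoC_pow.
  replace (z ^ 2)%C with (z * z)%C by ring.
  field. repeat split; try assumption; [apply one_sub_lam_neq0 | apply one_sub_sqr_neq0]; exact Hz.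
Qed.

End Shear.

(** * The norm bound *)

Lemma three_term_bound (lam r : R) : 0 <= lam < 1 -> 0 <= r < 1 ->
  2 * r + lam * (1 - r ^ 2) / (1 - lam * r) + lam ^ 2 * r <= 2 + lam + 2 * lam ^ 2.
Proof.
  intros Hlam Hr. assert (Hlr : 0 < 1 - lam * r) by nra.
  apply Rmult_le_reg_r with (1 - lam * r); [exact Hlr |].
  replace ((2 * r + lam * (1 - r ^ 2) / (1 - lam * r) + lam ^ 2 * r) * (1 - lam * r))
    with ((2 * r + lam ^ 2 * r) * (1 - lam * r) + lam * (1 - r ^ 2)) by (field; lra).
  (* The gap is (1 - r)(2 - 3 lam r + 2 lam^2 - lam^3 r) + lam r (1 - lam^2). *)
  assert (Hq : 0 <= 2 - 3 * lam * r + 2 * lam ^ 2 - lam ^ 3 * r).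
  { assert (0 <= (1 - r) * (3 * lam + lam ^ 3)) by (apply Rmult_le_pos; nra).
    assert (0 <= (1 - lam) * (2 - lam + lam ^ 2)) by (apply Rmult_le_pos; nra).
    nra. }
  assert (0 <= (1 - r) * (2 - 3 * lam * r + 2 * lam ^ 2 - lam ^ 3 * r))
    by (apply Rmult_le_pos; lra).
  assert (0 <= lam * r * (1 - lam ^ 2)) by (repeat apply Rmult_le_pos; nra).
  nra.
Qed.

Lemma Cmod_shear_pre_schwarzian_le (a lam : R) (z : C) : 0 <= lam < 1 -> in_disk z ->
  Cmod (shear_pre_schwarzian a lam z)
  <= 2 * (Cmod z + Rabs a) / (1 - Cmod z ^ 2) + lam / (1 - lam * Cmod z)
     + lam ^ 2 * Cmod z / (1 - Cmod z ^ 2).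
Proof.
  intros Hlam Hz. pose proof (Cmod_ge_0 z) as Hr0. pose proof Hz as Hr1. unfold in_disk in Hr1.
  assert (Hlz : Cmod (RtoC lam * z) = lam * Cmod z)
    by (rewrite Cmod_mult, Cmod_R, Rabs_right by lra; reflexivity).
  assert (Hr2 : 0 < 1 - Cmod z ^ 2) by nra.
  unfold shear_pre_schwarzian.
  eapply Rle_trans; [apply Cmod_sub_le |].
  eapply Rle_trans; [apply Rplus_le_compat_r, Cmod_triangle |].
  repeat apply Rplus_le_compat; apply Cmod_div_le.
  - rewrite Cmod_mult, Cmod_R, Rabs_right by lra. apply Rmult_le_compat_l; [lra |].
    rewrite <- (Cmod_R a). apply Cmod_triangle.
  - split; [exact Hr2 |]. replace (z ^ 2)%C with (z * z)%C by ring.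
    eapply Rle_trans; [| apply Cmod_one_sub_ge]. rewrite Cmod_mult. lra.
  - rewrite Cmod_R, Rabs_right by lra. lra.
  - split; [nra |]. rewrite <- Hlz. apply Cmod_one_sub_ge.
  - rewrite Cmod_mult, Cmod_conj, Cmod_R, Rabs_right by (apply Rle_ge, pow2_ge_0). lra.
  - assert (Hlr : (lam * Cmod z) ^ 2 <= Cmod z ^ 2) by (apply pow_incr; nra).
    rewrite Cmod_R, Hlz, Rabs_right by lra. lra.
Qed.

Lemma shear_pre_schwarzian_weighted_le (a lam : R) (z : C) : 0 <= lam < 1 -> in_disk z ->
  Cmod (shear_pre_schwarzian a lam z) * (1 - Cmod z ^ 2) <= 2 * (1 + Rabs a) + 2 * lam ^ 2 + lam.
Proof.
  intros Hlam Hz. pose proof (Cmod_ge_0 z) as Hr0. pose proof Hz as Hr1. unfold in_disk in Hr1.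
  set (r := Cmod z) in *. assert (Hr2 : 0 < 1 - r ^ 2) by nra.
  eapply Rle_trans.
  { apply Rmult_le_compat_r; [lra | exact (Cmod_shear_pre_schwarzian_le a lam z Hlam Hz)]. }
  fold r.
  replace ((2 * (r + Rabs a) / (1 - r ^ 2) + lam / (1 - lam * r) + lam ^ 2 * r / (1 - r ^ 2))
           * (1 - r ^ 2))
    with (2 * Rabs a + (2 * r + lam * (1 - r ^ 2) / (1 - lam * r) + lam ^ 2 * r)) by (field; nra).
  pose proof (three_term_bound lam r Hlam (conj Hr0 Hr1)). lra.
Qed.

Theorem theorem2p2 (a lam : R) (h g : C -> C) :
  0 <= lam < 1 ->
  analytic_on_disk h -> analytic_on_disk g ->
  h 0%C = 0%C -> g 0%C = 0%C ->
  (forall z : C, in_disk z -> (h z - g z)%C = k_fun a z) ->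
  (forall z : C, in_disk z ->
     C_derive h z <> 0%C /\ (C_derive g z / C_derive h z)%C = (RtoC lam * z)%C) ->
  (forall z : C, in_disk z ->
     pre_schwarzian h g z =
       (2 * (z + RtoC a) / (1 - z ^ 2) + RtoC lam / (1 - RtoC lam * z)
        - RtoC (lam ^ 2) * Cconj z / RtoC (1 - (Cmod (RtoC lam * z)) ^ 2))%C)
  /\ Rbar_le (pre_schwarzian_norm h g) (2 * (1 + Rabs a) + 2 * lam ^ 2 + lam).
Proof.
  intros Hlam Hh Hg _ _ Hhg Hdil.
  assert (Hformula := pre_schwarzian_eq a lam h g Hlam Hh Hg Hhg Hdil).
  split; [exact Hformula |].
  apply (Lub_Rbar_correct _). intros x [z [Hz ->]]. simpl.
  rewrite Hformula by exact Hz. apply shear_pre_schwarzian_weighted_le; assumption.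
Qed.
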